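(* Let $A$ be a finite set and let $(v_{xy})$ be a Llull matrix on $A$ with CLC structure that is not identically zero. Then $A$ has a top dominant irreducible component $X$ (for $(v_{xy})$), and moreover $v_{xy}>0$ for every $x\in X$ and every $y\in A$ with $y\neq x$.
   Context: A Llull matrix on a finite set $A$ is an assignment to each ordered pair of distinct elements $x\neq y$ of $A$ of a number $v_{xy}\in[0,1]$ such that $v_{xy}+v_{yx}\le 1$. Turnouts: $t_{xy}=v_{xy}+v_{yx}$; margins: $m_{xy}=v_{xy}-v_{yx}$. The matrix has CLC structure if there is a total order $\xi$ on $A$ such that, writing $x<_\xi y$ when $x$ precedes $y$ and $x'$ for the immediate successor of $x$ in $\xi$ (when it exists): (i) $v_{xy}\ge v_{yx}$ whenever $x<_\xi y$; (ii) $v_{xz}=\max(v_{xy},v_{yz})$ whenever $x<_\xi y<_\xi z$; (iii) $v_{zx}=\min(v_{zy},v_{yx})$ whenever $x<_\xi y<_\xi z$; (iv) $0\le t_{xz}-t_{x'z}\le m_{xx'}$ whenever $x'$ exists and $z\notin\{x,x'\}$. Indirect scores: for $x\neq y$, $\hat v_{xy}=\max$ over all paths $x=x_0,x_1,\dots,x_n=y$ of elements of $A$ (consecutive elements distinct) of $\min_{0\le i<n} v_{x_ix_{i+1}}$. Write $x\sim y$ iff $x=y$ or ($\hat v_{xy}>0$ and $\hat v_{yx}>0$); this is an equivalence relation whose classes are the irreducible components of $A$. Say $x$ dominates $y$ iff $\hat v_{xy}>0$ and $\hat v_{yx}=0$; this relation is compatible with $\sim$, so an irreducible component $C$ dominates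 a component $D$ iff some (equivalently every) $x\in C$ dominates some (equivalently every) $y\in D$. A top dominant irreducible component is an irreducible component that dominates every other irreducible component. *)

From HB Require Import structures.
From mathcomp Require Import all_boot all_order all_algebra.
From mathcomp Require Import all_classical all_reals.
Set Implicit Arguments. Unset Strict Implicit. Unset Printing Implicit Defensive.
Import Order.TTheory GRing.Theory Num.Theory.
Local Open Scope ring_scope.
Local Open Scope classical_set_scope.

Section Llull.
Variables (R : realType) (A : finType) (v : A -> A -> R).

Definition llull_matrix : Prop :=
  forall x y : A, x != y -> [/\ 0 <= v x y, v x y <= 1 & v x y + v y x <= 1].

Definition turnout (x y : A) : R := v x y + v y x.
Definition margin (x y : A) : R := v x y - v y x.

(* A total order xi on A is given by a duplicate-free enumeration s of A:
   x <_xi y iff index x s < index y s; the immediate successor of the item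
   at position i is the item at position i+1. *)
Definition total_order_enum (s : seq A) : Prop := uniq s /\ forall x, x \in s.

Definition clc_order (s : seq A) : Prop :=
  let lt x y := (index x s < index y s)%N in
  [/\ total_order_enum s,
      (forall x y, lt x y -> v y x <= v x y),
      (forall x y z, lt x y -> lt y z -> v x z = Num.max (v x y) (v y z)),
      (forall x y z, lt x y -> lt y z -> v z x = Num.min (v z y) (v y x)) &
      (forall (i : nat) (z : A), (i.+1 < size s)%N ->
         let x := nth z s i in let x' := nth z s i.+1 in
         z != x -> z != x' ->
         0 <= turnout x z - turnout x' z /\
         turnout x z - turnout x' z <= margin x x')].

Definition clc_structure : Prop := exists s : seq A, clc_order s.

(* Paths x = x_0, x_1, ..., x_n = y (n >= 1), consecutive elements distinct;
   represented by x and the nonempty tail [:: x_1; ...; x_n]. *)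
Definition is_path_from_to (x y : A) (p : seq A) : Prop :=
  [/\ p != [::], path (fun a b => a != b) x p & last x p = y].

(* min_{0 <= i < n} v_{x_i x_{i+1}} (the neutral element 1 is never used
   alone since paths are nonempty, and all entries are <= 1). *)
Definition path_min (x : A) (p : seq A) : R :=
  \big[Num.min/1]_(e <- zip (x :: p) p) v e.1 e.2.

(* Indirect score: maximum over all paths (the set of path values is finite,
   so the sup is attained and is the max). *)
Definition indirect (x y : A) : R :=
  sup [set path_min x p | p in [set p | is_path_from_to x y p]].

Definition equiv_ind (x y : A) : Prop :=
  x = y \/ (0 < indirect x y /\ 0 < indirect y x).

Definition dominates (x y : A) : Prop :=
  0 < indirect x y /\ indirect y x = 0.

Definition irreducible_component (C : set A) : Prop :=
  exists x0 : A, C = [set y | equiv_ind x0 y].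

Definition comp_dominates (C D : set A) : Prop :=
  exists x y, C x /\ D y /\ dominates x y.

Definition top_dominant_component (X : set A) : Prop :=
  irreducible_component X /\
  forall D, irreducible_component D -> D <> X -> comp_dominates X D.

End Llull.

(* Enumerate A along the CLC order as f 0, ..., f (n-1) and let K = top_end be the first
   position where the step back v (f K.+1) (f K) vanishes (K = n-1 if none does).
   By (iii), v (f j) (f i) is the minimum of the backward steps between i and j,
   so it is positive for i < j <= K and zero for i <= K < j.  By (ii),
   v (f i) (f j) >= v (f K) (f K.+1) for i <= K < j, and condition (iv) forces
   v (f K) (f K.+1) > 0: otherwise the first row would vanish (K = 0) or the
   margin between f K and f K.+1 would be too small to absorb the turnout drop
   (K > 0).  Hence X = {f 0, ..., f K} beats everybody directly and nobody
   outside X can reach X, so X is the top dominant component. *)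
From HB Require Import structures.
From mathcomp Require Import all_boot all_order all_algebra.
From mathcomp Require Import all_classical all_reals.
From mathcomp Require Import lra zify.
Set Implicit Arguments. Unset Strict Implicit. Unset Printing Implicit Defensive.
Import Order.TTheory GRing.Theory Num.Theory.
Local Open Scope ring_scope.
Local Open Scope classical_set_scope.

Section IndirectScores.
Variables (R : realType) (A : finType) (v : A -> A -> R).

Lemma path_min_le1 (x : A) (p : seq A) : path_min v x p <= 1.
Proof.
rewrite /path_min; elim: p x => [|y p IH] x /=; first by rewrite big_nil.
by rewrite big_cons ge_min IH orbT.
Qed.

Lemma path_min_seq1 (x y : A) : path_min v x [:: y] = Num.min (v x y) 1.
Proof. by rewrite /path_min /= big_cons big_nil. Qed.

Lemma is_path_seq1 (x y : A) : x != y -> is_path_from_to x y [:: y].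
Proof. by move=> hxy; split => //=; rewrite andbT. Qed.

Lemma indirect_ge_direct (x y : A) :
  x != y -> Num.min (v x y) 1 <= indirect v x y.
Proof.
move=> hxy; rewrite /indirect -path_min_seq1.
set S := [set _ | _ in _].
have Sy : S (path_min v x [:: y]) by exists [:: y] => //; apply: is_path_seq1.
have hS : has_sup S.
  split; first by exists (path_min v x [:: y]).
  by exists 1 => r [p _ <-]; apply: path_min_le1.
exact: (sup_upper_bound hS Sy).
Qed.

Lemma indirect_gt0 (x y : A) : x != y -> 0 < v x y -> 0 < indirect v x y.
Proof.
move=> hxy hv; apply: lt_le_trans (indirect_ge_direct hxy).
by rewrite lt_min hv ltr01.
Qed.

(* A path from outside Q into Q has to use some step that enters Q. *)
Lemma path_min_enter_le0 (Q : pred A) :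
  (forall a b, ~~ Q a -> Q b -> v a b = 0) ->
  forall p x, ~~ Q x -> Q (last x p) -> path_min v x p <= 0.
Proof.
move=> vQ; elim=> [|y p IH] x /= Qx Qlast; first by rewrite Qlast in Qx.
rewrite /path_min /= big_cons ge_min.
case Qy: (Q y); first by rewrite (vQ x y Qx Qy) lexx.
by rewrite IH ?Qy ?orbT.
Qed.

Lemma indirect_enter_eq0 (Q : pred A) :
  (forall a b, ~~ Q a -> Q b -> v a b = 0) ->
  forall x y, ~~ Q x -> Q y -> indirect v x y = 0.
Proof.
move=> vQ x y Qx Qy.
have hxy : x != y by apply: contraNneq Qx => ->.
apply/eqP; rewrite eq_le; apply/andP; split.
  apply: ge_sup; first by exists (path_min v x [:: y]), [:: y] => //; apply: is_path_seq1.
  by move=> r [p [_ _ lastp] <-]; apply: (path_min_enter_le0 vQ) => //; rewrite lastp.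
by apply: le_trans (indirect_ge_direct hxy); rewrite vQ // le_min lexx ler01.
Qed.

End IndirectScores.

Section CLCOrder.
Variables (R : realType) (A : finType) (v : A -> A -> R) (s : seq A) (x0 : A).
Hypotheses (v_llull : llull_matrix v) (s_clc : clc_order v s).

Let f i := nth x0 s i.
Let n := size s.

Lemma mem_clc y : y \in s. Proof. by case: s_clc => [[]]. Qed.

Lemma nth_index_clc y : f (index y s) = y. Proof. exact: nth_index (mem_clc y). Qed.

Lemma index_nth_clc i : (i < n)%N -> index (f i) s = i.
Proof. by move=> hi; apply: index_uniq hi _; case: s_clc => [[]]. Qed.

Lemma index_clc_lt y : (index y s < n)%N. Proof. by rewrite index_mem mem_clc. Qed.

Lemma index_clc_inj x y : x != y -> index x s != index y s.
Proof. by apply: contra_neq => e; rewrite -(nth_index_clc x) e nth_index_clc. Qed.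

Lemma nth_clc_inj i j : (i < n)%N -> (j < n)%N -> i != j -> f i != f j.
Proof.
by move=> hi hj; apply: contra_neq => e; rewrite -(index_nth_clc hi) e index_nth_clc.
Qed.

Lemma v_clc_ge0 i j : (i < n)%N -> (j < n)%N -> i != j -> 0 <= v (f i) (f j).
Proof. by move=> hi hj hij; case: (v_llull (nth_clc_inj hi hj hij)). Qed.

Lemma v_clc_back_le i j : (i < j < n)%N -> v (f j) (f i) <= v (f i) (f j).
Proof.
move=> hij; case: s_clc => _ H _ _ _; apply: H; rewrite !index_nth_clc //; lia.
Qed.

Lemma v_clc_max i j l : (i < j < l)%N -> (l < n)%N ->
  v (f i) (f l) = Num.max (v (f i) (f j)) (v (f j) (f l)).
Proof.
move=> hijl hl; case: s_clc => _ _ H _ _; apply: H; rewrite !index_nth_clc //; lia.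
Qed.

Lemma v_clc_min i j l : (i < j < l)%N -> (l < n)%N ->
  v (f l) (f i) = Num.min (v (f l) (f j)) (v (f j) (f i)).
Proof.
move=> hijl hl; case: s_clc => _ _ _ H _; apply: H; rewrite !index_nth_clc //; lia.
Qed.

Lemma turnout_clc_drop i z : (i.+1 < n)%N -> z != f i -> z != f i.+1 ->
  0 <= turnout v (f i) z - turnout v (f i.+1) z <= margin v (f i) (f i.+1).
Proof.
move=> hi hz hz'; case: s_clc => _ _ _ _ /(_ i z hi).
rewrite /= !(set_nth_default x0 z) //; last by lia.
by case/(_ hz hz') => -> ->.
Qed.

Lemma first_row_succ_eq0 j : (j.+2 < n)%N ->
  v (f 0) (f j.+1) = 0 -> v (f 0) (f j.+2) = 0.
Proof.
(* By (i) and v01, the turnout of f 0 against f j.+1 vanishes, and by (iv)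
   the turnout of f 0 can only decrease along the order. *)
move=> hj v01.
have ne1 : f 0 != f j.+1 by apply: nth_clc_inj; lia.
have ne2 : f 0 != f j.+2 by apply: nth_clc_inj; lia.
have /andP[drop_ge0 _] := turnout_clc_drop hj ne1 ne2.
have back := @v_clc_back_le 0 j.+1 (ltac:(lia)); rewrite v01 in back.
have ge02 : 0 <= v (f j.+2) (f 0) by apply: v_clc_ge0; lia.
have ge20 : 0 <= v (f 0) (f j.+2) by apply: v_clc_ge0; lia.
move: drop_ge0; rewrite /turnout v01 => drop_ge0.
apply/eqP; rewrite eq_le ge20 andbT; lra.
Qed.

Section NonZero.
Hypothesis v_neq0 : exists x y : A, x != y /\ v x y != 0.

(* If the first row vanished, (ii) would propagate the zeros to every v (f i) (f j)
   with i < j, and then (i) to all of v. *)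
Lemma first_row_neq0 : ~ (forall j, (0 < j < n)%N -> v (f 0) (f j) = 0).
Proof.
move=> row0; case: v_neq0 => x [y [hxy]]; apply/negP; rewrite negbK.
have fwd0 i j : (i < j < n)%N -> v (f i) (f j) = 0.
  case: i => [|i] hij; first by apply: row0; lia.
  have := @v_clc_max 0 i.+1 j (ltac:(lia)) (ltac:(lia)).
  rewrite row0; last by lia.
  move=> e; apply/eqP; rewrite eq_le v_clc_ge0 ?andbT; try lia.
  by rewrite e le_max lexx orbT.
rewrite -(nth_index_clc x) -(nth_index_clc y).
have hx := index_clc_lt x; have hy := index_clc_lt y.
case: (ltngtP (index x s) (index y s)) => hxy'.
- by apply/eqP; apply: fwd0; rewrite hxy' hy.
- have := @v_clc_back_le (index y s) (index x s).
  rewrite hxy' hx (fwd0 (index y s)) ?hxy' ?hx // => /(_ isT) le0.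
  by rewrite eq_le le0 v_clc_ge0 // index_clc_inj.
- by move: (index_clc_inj hxy); rewrite hxy' eqxx.
Qed.

Definition top_end := find (fun i => v (f i.+1) (f i) == 0) (iota 0 n.-1).

Lemma top_end_le : (top_end <= n.-1)%N.
Proof.
by have := find_size (fun i => v (f i.+1) (f i) == 0) (iota 0 n.-1); rewrite size_iota.
Qed.

Lemma v_step_top_end : (top_end < n.-1)%N -> v (f top_end.+1) (f top_end) = 0.
Proof.
move=> hK; apply/eqP.
have has_step : has (fun i => v (f i.+1) (f i) == 0) (iota 0 n.-1).
  by rewrite has_find size_iota.
by have := nth_find 0 has_step; rewrite -/top_end nth_iota.
Qed.

Lemma v_step_gt0 i : (i < top_end)%N -> 0 < v (f i.+1) (f i).
Proof.
move=> hi; have hK := top_end_le.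
have := before_find 0 hi; rewrite nth_iota ?add0n; last by lia.
by move=> /negbT ne0; rewrite lt_def ne0 v_clc_ge0 //; lia.
Qed.

Lemma v_first_forward_gt0 : (1 < n)%N -> 0 < v (f 0) (f 1).
Proof.
move=> hn; have ge01 : 0 <= v (f 0) (f 1) by apply: v_clc_ge0; lia.
rewrite lt_def ge01 andbT.
apply/negP => /eqP v01; apply: first_row_neq0.
elim=> [|j IH] // hj; case: j IH hj => [|j] IH hj; first by rewrite v01.
by apply: first_row_succ_eq0; [lia | apply: IH; lia].
Qed.

(* By (ii) and (iii), condition (iv) at f k.+1 against f k reads
   v (f k) (f k.+1) + v (f k.+1) (f k) - max (v (f k) (f k.+1)) (v (f k.+1) (f k.+2))
     <= v (f k.+1) (f k.+2),
   whence 0 < v (f k.+1) (f k) <= 2 v (f k.+1) (f k.+2). *)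
Lemma v_forward_gt0_after_back k : (k.+2 < n)%N ->
  0 < v (f k.+1) (f k) -> v (f k.+2) (f k.+1) = 0 -> 0 < v (f k.+1) (f k.+2).
Proof.
move=> hk back_gt0 back_eq0.
have ne1 : f k != f k.+1 by apply: nth_clc_inj; lia.
have ne2 : f k != f k.+2 by apply: nth_clc_inj; lia.
have /andP[_] := @turnout_clc_drop k.+1 (f k) hk ne1 ne2.
rewrite /turnout /margin (@v_clc_min k k.+1 k.+2) ?ltnSn //.
rewrite (@v_clc_max k k.+1 k.+2) ?ltnSn // back_eq0 (min_idPl (ltW back_gt0)).
have ge01 : 0 <= v (f k) (f k.+1) by apply: v_clc_ge0; lia.
have ge12 : 0 <= v (f k.+1) (f k.+2) by apply: v_clc_ge0; lia.
have : Num.max (v (f k) (f k.+1)) (v (f k.+1) (f k.+2))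
         <= v (f k) (f k.+1) + v (f k.+1) (f k.+2).
  by rewrite ge_max; apply/andP; split; lra.
lra.
Qed.

Lemma v_top_end_gt0 : (top_end < n.-1)%N -> 0 < v (f top_end) (f top_end.+1).
Proof.
move=> hK; have hstep := v_step_top_end hK.
case hK0 : top_end hK hstep => [|k] hK hstep.
  by apply: v_first_forward_gt0; lia.
by apply: v_forward_gt0_after_back; [lia | apply: v_step_gt0; lia | ].
Qed.

Lemma v_back_top_gt0 i j : (i < j <= top_end)%N -> 0 < v (f j) (f i).
Proof.
move=> /andP[hij hj]; have hK := top_end_le.
elim: j hij hj => [//|j IH] hij hj.
case: (ltngtP i j) => [hij' | hji | ->]; [ | lia | by apply: v_step_gt0; lia].
rewrite (@v_clc_min i j j.+1) ?hij' ?ltnSn //; last by lia.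
by rewrite lt_min v_step_gt0 ?IH //; lia.
Qed.

Lemma v_enter_top_eq0 i j : (i <= top_end < j)%N -> (j < n)%N -> v (f j) (f i) = 0.
Proof.
move=> /andP[hi hj] hjn; set K := top_end in hi hj *.
have le_K : v (f j) (f i) <= v (f j) (f K).
  case: (ltngtP i K) => [hiK | | ->] //; last by lia.
  by rewrite (@v_clc_min i K j) ?hiK ?hj // ge_min lexx.
have K_le0 : v (f j) (f K) <= 0.
  case: (ltngtP j K.+1) => [ | hjK | ->]; [lia | | by rewrite v_step_top_end //; lia].
  by rewrite (@v_clc_min K K.+1 j) ?ltnSn ?hjK // ge_min v_step_top_end ?lexx ?orbT //; lia.
by apply/eqP; rewrite eq_le (le_trans le_K K_le0) v_clc_ge0 //; lia.
Qed.

Lemma v_top_end_le i j : (i <= top_end < j)%N -> (j < n)%N ->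
  v (f top_end) (f top_end.+1) <= v (f i) (f j).
Proof.
move=> /andP[hi hj] hjn; set K := top_end in hi hj *.
have le_Kj : v (f K) (f K.+1) <= v (f K) (f j).
  case: (ltngtP j K.+1) => [ | hjK | ->] //; first by lia.
  by rewrite (@v_clc_max K K.+1 j) ?ltnSn ?hjK // le_max lexx.
apply: le_trans le_Kj _.
case: (ltngtP i K) => [hiK | | ->] //; last by lia.
by rewrite (@v_clc_max i K j) ?hiK ?hj // le_max lexx orbT.
Qed.

Definition in_top (y : A) : bool := (index y s <= top_end)%N.

Lemma in_top_first : in_top (f 0).
Proof. by rewrite /in_top index_nth_clc //; have := index_clc_lt x0; lia. Qed.

Lemma v_top_gt0 x y : in_top x -> y != x -> 0 < v x y.
Proof.
rewrite /in_top => hx hyx.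
rewrite -(nth_index_clc x) -(nth_index_clc y).
have hxn := index_clc_lt x; have hyn := index_clc_lt y.
case: (leqP (index y s) top_end) => hy.
  case: (ltngtP (index x s) (index y s)) => hxy.
  - by apply: lt_le_trans (v_clc_back_le _); rewrite ?hxy // v_back_top_gt0 ?hxy.
  - by apply: v_back_top_gt0; rewrite hxy.
  - by move: (index_clc_inj hyx); rewrite hxy eqxx.
apply: lt_le_trans (v_top_end_le _ _); rewrite ?hx ?hy //.
by apply: v_top_end_gt0; lia.
Qed.

Lemma v_enter_top a b : ~~ in_top a -> in_top b -> v a b = 0.
Proof.
rewrite /in_top -ltnNge => ha hb.
by rewrite -(nth_index_clc a) -(nth_index_clc b) v_enter_top_eq0 ?hb ?ha ?index_clc_lt.
Qed.

Lemma equiv_ind_top w : in_top w -> [set y | equiv_ind v w y] = [set y | in_top y].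
Proof.
move=> hw; apply/seteqP; split => y /=.
  case=> [<- //|[_ yw_gt0]]; apply/negPn/negP => hy.
  by move: yw_gt0; rewrite (indirect_enter_eq0 v_enter_top) // ltxx.
move=> hy; case: (eqVneq w y) => [->|hwy]; first by left.
have hyw : y != w by rewrite eq_sym.
by right; split; apply: indirect_gt0; rewrite ?v_top_gt0.
Qed.

Lemma clc_top_dominant : top_dominant_component v [set y | in_top y].
Proof.
split; first by exists (f 0); rewrite equiv_ind_top //; apply: in_top_first.
move=> D [x1 ->] hD; have top0 := in_top_first.
have x1_out : ~~ in_top x1 by apply: contra_notN hD => /equiv_ind_top.
have hne : x1 != f 0 by apply: contraNneq x1_out => ->.
exists (f 0), x1; split => //; split; first by left.
split; first by apply: indirect_gt0; rewrite 1?eq_sym // v_top_gt0.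
exact: (indirect_enter_eq0 v_enter_top).
Qed.

End NonZero.
End CLCOrder.

Theorem proposition3p3 (R : realType) (A : finType) (v : A -> A -> R) :
  llull_matrix v -> clc_structure v ->
  (exists x y : A, x != y /\ v x y != 0) ->
  exists X : set A, top_dominant_component v X /\
    (forall x y : A, X x -> y != x -> 0 < v x y).
Proof.
move=> v_llull [s s_clc] v_neq0; have [x0 _] := v_neq0.
exists [set y | in_top v s x0 y]; split.
  exact: clc_top_dominant.
by move=> x y; apply: v_top_gt0.
Qed.
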